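(* In $\mathrm{Leib}$, for every $n\ge0$ and $0\le i\le j\le n$, \[\rho_i^{n+1}\rho_j^n=\rho_{j+1}^{n+1}\rho_i^n.\]
   Context: Let $\Bbbk$ be a field and $\mathbb{K}=\bigoplus_{n\in\mathbb N}\Bbbk1_n$ with $1_n1_m=\delta_{nm}1_n$. A $\mathbb K$-algebra is the categorical algebra of a small $\Bbbk$-linear category with object set $\mathbb N$. Generators: $\partial^n_j$ ($n\ge0$, $0\le j\le n$), a morphism $n\to n+1$, and $\chi^n_i$ ($n\ge1$, $0\le i\le n-1$), an endomorphism of $n$; products with mismatched degrees are $0$. $\mathrm{Mag}$: free on the $\partial^n_j$ modulo $\partial^{n+1}_i\partial^n_j=\partial^{n+1}_{j+1}\partial^n_i$ ($0\le i<j\le n$). $\mathrm{Sym}$: free on the $\chi^n_i$ modulo $\chi^n_i\chi^n_j=\chi^n_j\chi^n_i$ ($|i-j|\ge2$), $\chi^n_i\chi^n_{i+1}\chi^n_i=\chi^n_{i+1}\chi^n_i\chi^n_{i+1}$, $\chi^n_i\chi^n_i=1_n$. $\mathrm{Sym}\otimes_\zeta\mathrm{Mag}$: generated by both with underlying bimodule $\mathrm{Sym}\otimes_{\mathbb K}\mathrm{Mag}$ and relations $\partial_i^n\chi_j^n=\chi^{n+1}_{j+1}\partial^n_i$ ($i<j$), $\chi^{n+1}_{i+1}\chi^{n+1}_i\partial^n_{i+1}$ ($i=j$), $\chi^{n+1}_{i-1}\chi^{n+1}_i\partial^n_{i-1}$ ($i=j+1$), $\chi^{n+1}_j\partial^n_i$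 ($i>j+1$). $\mathrm{Leib}$ is the quotient of $\mathrm{Sym}\otimes_\zeta\mathrm{Mag}$ by the ideal generated by $\partial^{n+1}_{j+1}\partial^n_j-(1_{n+2}-\chi^{n+2}_{j+1})\partial^{n+1}_j\partial^n_j$, $0\le j\le n$. In $\mathrm{Leib}$, $\rho^n_{-1}:=0$ and $\rho^n_j:=\partial^n_j+\sum_{a=1}^j\chi^{n+1}_j\cdots\chi^{n+1}_a\partial^n_{a-1}$ for $0\le j\le n$. *)

From HB Require Import structures.
From mathcomp Require Import all_boot all_algebra.
Set Implicit Arguments. Unset Strict Implicit. Unset Printing Implicit Defensive.
Import GRing.Theory.
Local Open Scope ring_scope.

(* Generators of the free K-algebra (K = ⊕_n k 1_n) on the quiver with     *)
(* vertices ℕ:  D n j = ∂^n_j : n -> n+1   (0 <= j <= n)                    *)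
(*              X n i = χ^n_i : n -> n     (n >= 1, 0 <= i <= n-1)          *)
Inductive gen := D of nat & nat | X of nat & nat.

Definition gen_code (g : gen) : bool * nat * nat :=
  match g with D n j => (true, n, j) | X n i => (false, n, i) end.
Definition gen_decode (c : bool * nat * nat) : gen :=
  let: (b, n, j) := c in if b then D n j else X n j.
Lemma gen_codeK : cancel gen_code gen_decode. Proof. by case. Qed.
HB.instance Definition _ := Equality.copy gen (can_type gen_codeK).

Definition gen_ok (g : gen) : bool :=
  match g with D n j => (j <= n)%N | X n i => (i < n)%N end.
Definition gen_src (g : gen) : nat := match g with D n _ => n | X n _ => n end.
Definition gen_tgt (g : gen) : nat := match g with D n _ => n.+1 | X n _ => n end.

(* A path (monomial) is (s, w): source object s and word w = g1 g2 ... gm  *)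
(* read as the product g1 * g2 * ... * gm (gm applied first).  The empty  *)
(* word at s is the idempotent 1_s.  [walk s w] is the target of the path *)
(* if it is a well-formed composable path, None otherwise.                *)
Definition path := (nat * seq gen)%type.

Definition walk (s : nat) (w : seq gen) : option nat :=
  foldr (fun g o => if o is Some t then
                      if gen_ok g && (gen_src g == t) then Some (gen_tgt g) else None
                    else None) (Some s) w.

Definition validp (p : path) : bool := walk p.1 p.2 != None.

Section FreeAlg.
Variable k : fieldType.

(* Elements of the free K-algebra, as formal finite sums of paths. *)
Definition fsum := seq (k * path).

(* coefficient of a path: two formal sums are equal in the free algebra  *)
(* iff all their coefficients agree *)
Definition coef (a : fsum) (p : path) : k := \sum_(x <- a | x.2 == p) x.1.

Definition fadd (a b : fsum) : fsum := a ++ b.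
Definition fscale (c : k) (a : fsum) : fsum := [seq (c * x.1, x.2) | x <- a].
Definition fsub (a b : fsum) : fsum := a ++ fscale (-1) b.

(* product: x * y is the concatenated path when target(y) = source(x),   *)
(* and 0 otherwise (products with mismatched degrees vanish) *)
Definition fmul (a b : fsum) : fsum :=
  flatten [seq [seq (x.1 * y.1, (y.2.1, x.2.2 ++ y.2.2))
               | y <- b & walk y.2.1 y.2.2 == Some x.2.1] | x <- a].

Definition mono (p : path) : fsum := [:: (1, p)].
Definition one (n : nat) : fsum := mono (n, [::]).
Definition dd (n j : nat) : fsum := mono (n, [:: D n j]).
Definition chi (n i : nat) : fsum := mono (n, [:: X n i]).

(* Defining relators of Leib (each relator r stands for the relation r = 0) *)
Inductive leib_rel : fsum -> Prop :=
  | rel_mag n i j : (i < j)%N -> (j <= n)%N ->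
      leib_rel (fsub (fmul (dd n.+1 i) (dd n j)) (fmul (dd n.+1 j.+1) (dd n i)))
  | rel_sym_far n i j : (i < n)%N -> (j < n)%N -> (i + 2 <= j)%N || (j + 2 <= i)%N ->
      leib_rel (fsub (fmul (chi n i) (chi n j)) (fmul (chi n j) (chi n i)))
  | rel_sym_braid n i : (i.+1 < n)%N ->
      leib_rel (fsub (fmul (chi n i) (fmul (chi n i.+1) (chi n i)))
                     (fmul (chi n i.+1) (fmul (chi n i) (chi n i.+1))))
  | rel_sym_inv n i : (i < n)%N ->
      leib_rel (fsub (fmul (chi n i) (chi n i)) (one n))
  (* distributive law ζ of Sym ⊗_ζ Mag:  ∂^n_i χ^n_j = ... *)
  | rel_zeta_lt n i j : (i <= n)%N -> (j < n)%N -> (i < j)%N ->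
      leib_rel (fsub (fmul (dd n i) (chi n j)) (fmul (chi n.+1 j.+1) (dd n i)))
  | rel_zeta_eq n i : (i < n)%N ->
      leib_rel (fsub (fmul (dd n i) (chi n i))
                     (fmul (chi n.+1 i.+1) (fmul (chi n.+1 i) (dd n i.+1))))
  | rel_zeta_succ n j : (j.+1 <= n)%N -> (j < n)%N ->
      leib_rel (fsub (fmul (dd n j.+1) (chi n j))
                     (fmul (chi n.+1 j) (fmul (chi n.+1 j.+1) (dd n j))))
  | rel_zeta_gt n i j : (i <= n)%N -> (j < n)%N -> (j.+1 < i)%N ->
      leib_rel (fsub (fmul (dd n i) (chi n j)) (fmul (chi n.+1 j) (dd n i)))
  | rel_leib n j : (j <= n)%N ->
      leib_rel (fsub (fmul (dd n.+1 j.+1) (dd n j))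
                     (fmul (fsub (one n.+2) (chi n.+2 j.+1))
                           (fmul (dd n.+1 j) (dd n j)))).

(* The two-sided ideal generated by the relators: k-linear combinations  *)
(* of u * r * v with r a relator and u, v paths (idempotents included). *)
Inductive leib_ideal : fsum -> Prop :=
  | ideal0 : leib_ideal [::]
  | ideal_step f c u r v : leib_ideal f -> leib_rel r -> validp u -> validp v ->
      leib_ideal (fadd f (fscale c (fmul (fmul (mono u) r) (mono v))))
  | ideal_ext f g : leib_ideal f -> (forall p, coef f p = coef g p) -> leib_ideal g.

Definition leib_eq (a b : fsum) : Prop := leib_ideal (fsub a b).

(* ρ^n_j = ∂^n_j + Σ_{a=1}^j χ^{n+1}_j ⋯ χ^{n+1}_a ∂^n_{a-1}   (ρ^n_{-1} = 0) *)
Definition chi_chain (n j a : nat) : fsum :=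
  foldr (fun m acc => fmul (chi n.+1 m) acc) (dd n a.-1) (rev (iota a (j - a).+1)).

Definition rho (n j : nat) : fsum :=
  fadd (dd n j) (flatten [seq chi_chain n j a | a <- iota 1 j]).

End FreeAlg.

(* In Leib, ρ^n_{j+1} = ∂^n_{j+1} + χ^{n+1}_{j+1} ρ^n_j.  Expanding ρ^{n+1}_i on
   the left and ρ^n_i on the right, the identity follows by induction on i from
   two commutation rules: ∂^{n+1}_i ρ^n_j = ρ^{n+1}_{j+1} ∂^n_i for i ≤ j, whose
   diagonal case i = j is the Leibniz relation and whose off-diagonal cases
   come from Mag; and ρ^m_j χ^m_e = χ^{m+1}_e ρ^m_j for e < j, from the
   distributive law ζ together with χ^2 = 1 and the braid relation. *)

From Pilot Require Import Defs.
From mathcomp Require Import all_boot all_algebra.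
From Stdlib Require Import Setoid.
From mathcomp Require Import zify ring.
Set Implicit Arguments. Unset Strict Implicit. Unset Printing Implicit Defensive.
Import GRing.Theory.
Local Open Scope ring_scope.

Section FormalSums.
Variable k : fieldType.
Implicit Types a b c : fsum k.

Lemma coef_nil p : coef ([::] : fsum k) p = 0.
Proof. by rewrite /coef big_nil. Qed.

Lemma coef_cons x a p : coef (x :: a) p = (if x.2 == p then x.1 else 0) + coef a p.
Proof. by rewrite /coef big_cons; case: ifP; rewrite ?add0r. Qed.

Lemma coef_cat a b p : coef (a ++ b) p = coef a p + coef b p.
Proof. by rewrite /coef big_cat. Qed.

Lemma coef_flatten (L : seq (fsum k)) p : coef (flatten L) p = \sum_(l <- L) coef l p.
Proof. by rewrite /coef big_flatten. Qed.

Lemma coef_fadd a b p : coef (fadd a b) p = coef a p + coef b p.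
Proof. exact: coef_cat. Qed.

Lemma coef_fscale (s : k) a p : coef (fscale s a) p = s * coef a p.
Proof. by rewrite /coef /fscale big_map mulr_sumr. Qed.

Lemma coef_fsub a b p : coef (fsub a b) p = coef a p - coef b p.
Proof. by rewrite /fsub coef_cat coef_fscale mulN1r. Qed.

Lemma coef_mono_scale x : coef [:: x] =1 coef (fscale x.1 (mono k x.2)).
Proof. by move=> q; rewrite !coef_cons !coef_nil mulr1. Qed.

Definition composes (q r p : Defs.path) : bool :=
  (walk r.1 r.2 == Some q.1) && ((r.1, q.2 ++ r.2) == p).

Lemma coef_fmul a b p : coef (fmul a b) p =
  \sum_(x <- a) \sum_(y <- b) (if composes x.2 y.2 p then x.1 * y.1 else 0).
Proof.
rewrite /coef /fmul big_flatten big_map; apply: eq_bigr => x _.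
by rewrite big_map big_filter_cond big_mkcond.
Qed.

Lemma coef_fmul_l a b p : coef (fmul a b) p =
  \sum_(x <- a) x.1 * \sum_(y <- b) (if composes x.2 y.2 p then y.1 else 0).
Proof.
rewrite coef_fmul; apply: eq_bigr => x _; rewrite mulr_sumr.
by apply: eq_bigr => y _; case: ifP; rewrite ?mulr0.
Qed.

Lemma coef_fmul_r a b p : coef (fmul a b) p =
  \sum_(y <- b) y.1 * \sum_(x <- a) (if composes x.2 y.2 p then x.1 else 0).
Proof.
rewrite coef_fmul exchange_big; apply: eq_bigr => y _; rewrite mulr_sumr.
by apply: eq_bigr => x _; case: ifP; rewrite ?mulr0 // mulrC.
Qed.

Lemma walk_cat s w1 w2 :
  walk s (w1 ++ w2) = if walk s w2 is Some t then walk t w1 else None.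
Proof.
rewrite /walk foldr_cat; case: (foldr _ _ w2) => [t|] //.
by elim: w1 => //= g w1 ->.
Qed.

Lemma sum_coef_seq (G : Defs.path -> k) a (s : seq Defs.path) :
  uniq s -> {subset map snd a <= s} ->
  \sum_(x <- a) x.1 * G x.2 = \sum_(q <- s) coef a q * G q.
Proof.
move=> us; elim: a => [|x a IH] sub.
  by rewrite big_nil big1 // => q _; rewrite coef_nil mul0r.
rewrite big_cons IH; last by move=> q qa; apply: sub; rewrite inE qa orbT.
have xs : x.2 \in s by apply: sub; rewrite inE eqxx.
under [RHS]eq_bigr do rewrite coef_cons mulrDl.
rewrite big_split /=; congr (_ + _).
rewrite (bigD1_seq x.2) //= eqxx big1 ?addr0 // => q /negbTE.
by rewrite eq_sym => ->; rewrite mul0r.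
Qed.

Lemma eq_sum_coef (P : pred Defs.path) (G : Defs.path -> k) a b :
  {in P, coef a =1 coef b} -> (forall q, ~~ P q -> G q = 0) ->
  \sum_(x <- a) x.1 * G x.2 = \sum_(x <- b) x.1 * G x.2.
Proof.
move=> Hab HG; set s := undup (map snd (a ++ b)).
have us : uniq s by exact: undup_uniq.
rewrite (sum_coef_seq G us) ?(sum_coef_seq G us);
  try by move=> q qx; rewrite mem_undup map_cat mem_cat qx ?orbT.
apply: eq_bigr => q _; case Pq: (P q); first by rewrite Hab.
by rewrite HG ?Pq // !mulr0.
Qed.

Lemma fmul_coef_eql a a' b : coef a =1 coef a' -> coef (fmul a b) =1 coef (fmul a' b).
Proof.
move=> H p; rewrite !coef_fmul_l.
pose G q := \sum_(y <- b) (if composes q y.2 p then y.1 else 0).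
by apply: (eq_sum_coef (P := predT) (G := G)) => // q _; apply: H.
Qed.

Lemma fmul_coef_eqr a b b' :
  {in validp, coef b =1 coef b'} -> coef (fmul a b) =1 coef (fmul a b').
Proof.
move=> H p; rewrite !coef_fmul_r.
pose G q := \sum_(x <- a) (if composes x.2 q p then x.1 else 0).
apply: (eq_sum_coef (G := G) H) => q.
by rewrite /validp negbK => /eqP wq; apply: big1 => x _; rewrite /composes wq.
Qed.

Lemma fmul_coef_eql_in a a' c : {in validp, coef a =1 coef a'} ->
  {in validp, coef (fmul a c) =1 coef (fmul a' c)}.
Proof.
move=> H p vp; rewrite !coef_fmul_l.
pose G q := \sum_(y <- c) (if composes q y.2 p then y.1 else 0).
apply: (eq_sum_coef (G := G) H) => q.
rewrite /validp negbK => /eqP wq; apply: big1 => y _; rewrite /composes.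
case: eqP => //= wy; case: eqP => //= ep.
by move: vp; rewrite -ep unfold_in /validp /= walk_cat wy wq.
Qed.

Lemma fmul_catl a a' b : fmul (a ++ a') b = fmul a b ++ fmul a' b.
Proof. by rewrite /fmul map_cat flatten_cat. Qed.

Lemma fmul_catr a b b' : coef (fmul a (b ++ b')) =1 coef (fmul a b ++ fmul a b').
Proof.
move=> p; rewrite coef_cat !coef_fmul -big_split; apply: eq_bigr => x _.
by rewrite big_cat.
Qed.

Lemma fmul_scalel (s : k) a b : coef (fmul (fscale s a) b) =1 coef (fscale s (fmul a b)).
Proof.
move=> p; rewrite coef_fscale !coef_fmul /fscale big_map mulr_sumr.
apply: eq_bigr => x _; rewrite mulr_sumr; apply: eq_bigr => y _ /=.
by case: ifP; rewrite ?mulr0 ?mulrA.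
Qed.

Lemma fmul_scaler (s : k) a b : coef (fmul a (fscale s b)) =1 coef (fscale s (fmul a b)).
Proof.
move=> p; rewrite coef_fscale !coef_fmul mulr_sumr.
apply: eq_bigr => x _; rewrite /fscale big_map mulr_sumr; apply: eq_bigr => y _ /=.
by case: ifP; rewrite ?mulr0 // mulrCA.
Qed.

Lemma fmul_subl a a' b :
  coef (fmul (fsub a a') b) =1 coef (fsub (fmul a b) (fmul a' b)).
Proof.
by move=> p; rewrite /fsub fmul_catl !coef_cat fmul_scalel.
Qed.

Lemma fmul_subr a b b' :
  coef (fmul a (fsub b b')) =1 coef (fsub (fmul a b) (fmul a b')).
Proof.
by move=> p; rewrite /fsub fmul_catr !coef_cat fmul_scaler.
Qed.

Lemma fmul0r a : coef (fmul a [::]) =1 coef [::].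
Proof. by move=> p; rewrite coef_fmul coef_nil big1 // => x _; rewrite big_nil. Qed.

Lemma fmul_flatten a (L : seq (fsum k)) :
  coef (fmul a (flatten L)) =1 coef (flatten [seq fmul a l | l <- L]).
Proof.
elim: L => [|l L IH] p /=; first exact: fmul0r.
by rewrite fmul_catr !coef_cat IH.
Qed.

Lemma sum_fmul (F : Defs.path -> k) b c :
  \sum_(w <- fmul b c) w.1 * F w.2 =
  \sum_(y <- b) \sum_(z <- c)
     (if walk z.2.1 z.2.2 == Some y.2.1 then y.1 * z.1 * F (z.2.1, y.2.2 ++ z.2.2)
      else 0).
Proof.
rewrite /fmul big_flatten big_map; apply: eq_bigr => y _.
by rewrite big_map big_filter big_mkcond.
Qed.

(* Both sides are the triple sum over x in a, y in b, z in c of the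
   coefficient of x y z at p; [walk_cat] identifies the two composability
   conditions. *)
Lemma coef_fmulA a b c : coef (fmul a (fmul b c)) =1 coef (fmul (fmul a b) c).
Proof.
move=> p; rewrite coef_fmul_l coef_fmul_r.
pose F (x : k * Defs.path) (w : Defs.path) := if composes x.2 w p then 1 else (0 : k).
pose H (z : k * Defs.path) (v : Defs.path) := if composes v z.2 p then 1 else (0 : k).
transitivity (\sum_(x <- a) x.1 * \sum_(w <- fmul b c) w.1 * F x w.2).
  apply: eq_bigr => x _; congr (_ * _); apply: eq_bigr => w _.
  by rewrite /F; case: ifP; rewrite ?mulr1 ?mulr0.
transitivity (\sum_(z <- c) z.1 * \sum_(v <- fmul a b) v.1 * H z v.2); last first.
  apply: eq_bigr => z _; congr (_ * _); apply: eq_bigr => v _.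
  by rewrite /H; case: ifP; rewrite ?mulr1 ?mulr0.
under eq_bigr => x _ do rewrite sum_fmul mulr_sumr.
under [RHS]eq_bigr => z _ do rewrite sum_fmul mulr_sumr.
rewrite [RHS]exchange_big /=; apply: eq_bigr => x _.
under [RHS]eq_bigr => z _ do rewrite mulr_sumr.
rewrite [RHS]exchange_big /=; apply: eq_bigr => y _.
rewrite mulr_sumr; apply: eq_bigr => z _.
rewrite /F /H /composes /=.
case: (walk z.2.1 z.2.2 =P Some y.2.1) => wz /=.
  rewrite walk_cat wz catA.
  case: (walk y.2.1 y.2.2 =P Some x.2.1) => wy /=; rewrite ?mulr0 ?mul0r //.
  by case: (_ == p); rewrite ?mulr1 ?mulr0 // mulrA [RHS]mulrC.
by case: (walk y.2.1 y.2.2 =P Some x.2.1) => wy /=; rewrite ?mulr0 ?mul0r.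
Qed.

Lemma fmul_mono u w : coef (fmul (mono k u) (mono k w)) =1
  coef (if walk w.1 w.2 == Some u.1 then mono k (w.1, u.2 ++ w.2) else [::]).
Proof.
move=> p; rewrite /fmul /mono /=; case: ifP => _ //=.
by rewrite !coef_cons !coef_nil mulr1.
Qed.

End FormalSums.

Section Ideal.
Variable k : fieldType.
Implicit Types a b c f g : fsum k.

(* [a] lies in [1_t A 1_s]. *)
Definition homog (s t : nat) a :=
  all (fun x : k * Defs.path => (x.2.1 == s) && (walk x.2.1 x.2.2 == Some t)) a.

Definition valid_sum a := all (fun x : k * Defs.path => validp x.2) a.

Lemma homog_cat s t a b : homog s t a -> homog s t b -> homog s t (a ++ b).
Proof. by rewrite /homog all_cat => -> ->. Qed.

Lemma homog_fscale s t (c : k) a : homog s t a -> homog s t (fscale c a).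
Proof. by rewrite /homog /fscale all_map. Qed.

Lemma homog_fsub s t a b : homog s t a -> homog s t b -> homog s t (fsub a b).
Proof. by move=> ha hb; apply: homog_cat => //; apply: homog_fscale. Qed.

Lemma homog_fmul s m t a b : homog m t a -> homog s m b -> homog s t (fmul a b).
Proof.
move=> /allP ha /allP hb; apply/allP => z /flattenP [l /mapP [x xa ->]].
case/mapP => y; rewrite mem_filter => /andP [/eqP wy yb] -> /=.
have /andP [/eqP hx1 /eqP hx2] := ha x xa; have /andP [/eqP hy1 _] := hb y yb.
by rewrite walk_cat wy hy1 eqxx /= hx2.
Qed.

Lemma homog_flatten s t (L : seq (fsum k)) :
  all (homog s t) L -> homog s t (flatten L).
Proof. by elim: L => //= a L IH /andP [ha hL]; apply: homog_cat (IH hL). Qed.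

Lemma homog_dd n j : (j <= n)%N -> homog n n.+1 (dd k n j).
Proof. by move=> hj; rewrite /homog /= eqxx /= hj eqxx. Qed.

Lemma homog_chi n i : (i < n)%N -> homog n n (chi k n i).
Proof. by move=> hi; rewrite /homog /= eqxx /= hi eqxx. Qed.

Lemma homog_one n : homog n n (Defs.one k n).
Proof. by rewrite /homog /= !eqxx. Qed.

Lemma homog_chi_chain m j (a : nat) : (1 <= a <= j)%N -> (j <= m)%N ->
  homog m m.+1 (chi_chain k m j a).
Proof.
move=> ha hj; rewrite /chi_chain.
have : all (fun l => l < m.+1)%N (rev (iota a (j - a).+1)).
  by rewrite all_rev; apply/allP => l; rewrite mem_iota; lia.
elim: (rev _) => /= [_|l s IH /andP [hl hs]]; first by apply: homog_dd; lia.
exact: homog_fmul (homog_chi hl) (IH hs).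
Qed.

Lemma homog_rho m j : (j <= m)%N -> homog m m.+1 (rho k m j).
Proof.
move=> hj; apply: homog_cat (homog_dd hj) _.
apply/homog_flatten/allP => _ /mapP [a ha ->].
by apply: homog_chi_chain => //; move: ha; rewrite mem_iota; lia.
Qed.

Lemma homog_valid s t a : homog s t a -> valid_sum a.
Proof. by move=> /allP h; apply/allP => x /h /andP [_ /eqP e]; rewrite /validp e. Qed.

Lemma valid_fmul a b : valid_sum a -> valid_sum (fmul a b).
Proof.
move=> /allP ha; apply/allP => z /flattenP [l /mapP [x xa ->]].
case/mapP => y; rewrite mem_filter => /andP [/eqP wy yb] -> /=.
by rewrite /validp /= walk_cat wy; apply: ha.
Qed.

Lemma valid_mono u : validp u -> valid_sum (mono k u).
Proof. by rewrite /valid_sum /= andbT. Qed.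

Lemma coef_invalid a p : valid_sum a -> ~~ validp p -> coef a p = 0.
Proof.
move=> /allP ha hp; rewrite /coef big_seq_cond big1 // => x /andP [xa /eqP e].
by move: (ha x xa) hp; rewrite e => ->.
Qed.

Lemma fmul_onel s t a : homog s t a -> coef (fmul (Defs.one k t) a) =1 coef a.
Proof.
move=> /allP ha p; rewrite coef_fmul big_cons big_nil addr0 /coef [RHS]big_mkcond /=.
rewrite big_seq [RHS]big_seq; apply: eq_bigr => y ya.
rewrite /composes /=; have /andP [_ /eqP ->] := ha y ya; rewrite eqxx /= mul1r.
by case: y {ya} => ? [].
Qed.

Lemma fmul_oner s t a : homog s t a -> coef (fmul a (Defs.one k s)) =1 coef a.
Proof.
move=> /allP ha p; rewrite coef_fmul /coef [RHS]big_mkcond /=.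
rewrite big_seq [RHS]big_seq; apply: eq_bigr => x xa.
rewrite big_cons big_nil addr0 /composes /=.
have /andP [/eqP e _] := ha x xa; rewrite e eqxx /= mulr1 cats0.
by move: e; case: x {xa} => ? [? ?] /= ->.
Qed.

Lemma ideal_cat f g : leib_ideal f -> leib_ideal g -> leib_ideal (f ++ g).
Proof.
move=> hf; elim=> [|g' c u r v _ IH hr hu hv|g' g'' _ IH e].
- by rewrite cats0.
- by rewrite /fadd catA; apply: ideal_step.
- by apply: ideal_ext IH _ => p; rewrite !coef_cat e.
Qed.

Lemma ideal_fscale (s : k) f : leib_ideal f -> leib_ideal (fscale s f).
Proof.
elim=> [|g c u r v _ IH hr hu hv|g g' _ IH e].
- exact: ideal0.
- apply: ideal_ext (ideal_step (s * c) IH hr hu hv) _ => p.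
  by rewrite /fadd !(coef_cat, coef_fscale) mulrDr mulrA.
- by apply: ideal_ext IH _ => p; rewrite !coef_fscale e.
Qed.

Lemma ideal_nil_fmulr f : leib_ideal (fmul f [::]).
Proof. exact: ideal_ext (@ideal0 k) (fun p => esym (fmul0r f p)). Qed.

Lemma coef_ideal_invalid g p : leib_ideal g -> ~~ validp p -> coef g p = 0.
Proof.
move=> h hp; elim: h => [|f c u r v _ IH hr hu hv|f f' _ IH e].
- exact: coef_nil.
- rewrite /fadd coef_cat IH coef_fscale coef_invalid ?mulr0 ?addr0 //.
  exact/valid_fmul/valid_fmul/valid_mono.
- by rewrite -e.
Qed.

Lemma ideal_gen u r v : leib_rel r -> validp u -> validp v ->
  leib_ideal (fmul (fmul (mono k u) r) (mono k v)).
Proof.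
move=> hr hu hv; apply: ideal_ext (ideal_step 1 (@ideal0 k) hr hu hv) _ => p.
by rewrite /fadd coef_cat coef_nil add0r coef_fscale mul1r.
Qed.

Lemma ideal_fmul_monol w g : validp w -> leib_ideal g -> leib_ideal (fmul (mono k w) g).
Proof.
move=> hw; elim=> [|f c u r v _ IH hr hu hv|f f' _ IH e].
- exact: ideal0.
- apply: (ideal_ext (f := fmul (mono k w) f ++
      fscale c (fmul (fmul (fmul (mono k w) (mono k u)) r) (mono k v)))).
    apply: ideal_cat => //; apply: ideal_fscale.
    apply: ideal_ext _ (fun p => esym (fmul_coef_eql (mono k v)
                                 (fmul_coef_eql r (fmul_mono k w u)) p)).
    case: eqP => wu; last exact: ideal0.
    by apply: ideal_gen => //; rewrite /validp /= walk_cat wu.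
  move=> p; rewrite /fadd fmul_catr [LHS]coef_cat [RHS]coef_cat; congr (_ + _).
  rewrite fmul_scaler !coef_fscale; congr (_ * _).
  by rewrite [RHS]coef_fmulA (fmul_coef_eql _ (coef_fmulA _ _ _)).
- by apply: ideal_ext IH _; apply: fmul_coef_eqr => ? _; apply: e.
Qed.

Lemma ideal_fmul_monor w g : leib_ideal g -> leib_ideal (fmul g (mono k w)).
Proof.
elim=> [|f c u r v _ IH hr hu hv|f f' _ IH e].
- exact: ideal0.
- apply: (ideal_ext (f := fmul f (mono k w) ++
      fscale c (fmul (fmul (mono k u) r) (fmul (mono k v) (mono k w))))).
    apply: ideal_cat => //; apply: ideal_fscale.
    apply: ideal_ext _ (fun p => esym (fmul_coef_eqr _ (in1W (fmul_mono k v w)) p)).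
    case: eqP => wv; last exact: ideal_nil_fmulr.
    by apply: ideal_gen => //; rewrite /validp /= walk_cat wv.
  move=> p; rewrite /fadd fmul_catl [LHS]coef_cat [RHS]coef_cat; congr (_ + _).
  by rewrite fmul_scalel !coef_fscale coef_fmulA.
- by apply: ideal_ext IH _; apply: fmul_coef_eql.
Qed.

Lemma fmul_consl x a b :
  coef (fmul (x :: a) b) =1 coef (fscale x.1 (fmul (mono k x.2) b) ++ fmul a b).
Proof.
move=> p; rewrite -cat1s fmul_catl [LHS]coef_cat [RHS]coef_cat -fmul_scalel.
by rewrite (fmul_coef_eql b (coef_mono_scale x)).
Qed.

Lemma fmul_consr a y b :
  coef (fmul a (y :: b)) =1 coef (fscale y.1 (fmul a (mono k y.2)) ++ fmul a b).
Proof.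
move=> p; rewrite -cat1s fmul_catr [LHS]coef_cat [RHS]coef_cat -fmul_scaler.
by rewrite (fmul_coef_eqr a (in1W (coef_mono_scale y))).
Qed.

Lemma ideal_fmull c g : valid_sum c -> leib_ideal g -> leib_ideal (fmul c g).
Proof.
move=> hc hg; elim: c hc => [_|x c IH /= /andP [hx hc]]; first exact: ideal0.
apply: ideal_ext _ (fun p => esym (fmul_consl x c g p)).
by apply: ideal_cat; [apply/ideal_fscale/ideal_fmul_monol | apply: IH].
Qed.

Lemma ideal_fmulr c g : leib_ideal g -> leib_ideal (fmul g c).
Proof.
move=> hg; elim: c => [|y c IH]; first exact: ideal_nil_fmulr.
apply: ideal_ext _ (fun p => esym (fmul_consr g y c p)).
by apply: ideal_cat; [apply/ideal_fscale/ideal_fmul_monor | apply: IH].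
Qed.

End Ideal.

Section Congruence.
Variable k : fieldType.
Implicit Types a b c : fsum k.

(* Vanishing in [Leib] is tested only on composable paths: this makes it
   stable under left multiplication by arbitrary formal sums. *)
Definition leib_zero a := exists2 g, leib_ideal g & {in validp, coef a =1 coef g}.

Definition leib_eqv a b := leib_zero (fsub a b).

Lemma leib_zero_ext a b : leib_zero a -> {in validp, coef a =1 coef b} -> leib_zero b.
Proof. by case=> g hg eg h; exists g => // p vp; rewrite -h ?eg. Qed.

Lemma leib_zero_coef0 a : {in validp, coef a =1 fun=> 0} -> leib_zero a.
Proof. by move=> h; exists [::]; [exact: ideal0 | move=> p vp; rewrite h ?coef_nil]. Qed.

Lemma leib_zero_cat a b : leib_zero a -> leib_zero b -> leib_zero (a ++ b).
Proof.
case=> g hg eg [g' hg' eg']; exists (g ++ g'); first exact: ideal_cat.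
by move=> p vp; rewrite !coef_cat eg ?eg'.
Qed.

Lemma leib_zero_fscale (s : k) a : leib_zero a -> leib_zero (fscale s a).
Proof.
case=> g hg eg; exists (fscale s g); first exact: ideal_fscale.
by move=> p vp; rewrite !coef_fscale eg.
Qed.

Lemma coef_fmul_filter_valid c b : {in validp,
  coef (fmul c b) =1 coef (fmul [seq x <- c | validp x.2] b)}.
Proof.
move=> p vp; rewrite !coef_fmul_l big_filter [RHS]big_mkcond /=.
apply: eq_bigr => x _; case: ifP => // vx.
rewrite big1 ?mulr0 // => y _; rewrite /composes.
case: eqP => //= wy; case: eqP => //= ep.
by move: vp vx; rewrite -ep unfold_in /validp /= walk_cat wy => ->.
Qed.

Lemma leib_zero_fmull c a : leib_zero a -> leib_zero (fmul c a).
Proof.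
case=> g hg eg; exists (fmul [seq x <- c | validp x.2] g).
  by apply: ideal_fmull hg; apply/allP => x; rewrite mem_filter => /andP [].
by move=> p vp; rewrite (fmul_coef_eqr _ eg) coef_fmul_filter_valid.
Qed.

Lemma leib_zero_fmulr c a : leib_zero a -> leib_zero (fmul a c).
Proof.
case=> g hg eg; exists (fmul g c); first exact: ideal_fmulr.
exact: fmul_coef_eql_in.
Qed.

Lemma leib_zero_rel s t r : leib_rel r -> homog s t r -> leib_zero r.
Proof.
move=> hr hst; exists (fmul (fmul (mono k (t, [::])) r) (mono k (s, [::]))).
  exact: ideal_gen.
have h1 : homog s t (fmul (Defs.one k t) r) by apply: homog_fmul (homog_one _ _) hst.
by move=> p _; rewrite (fmul_oner h1) (fmul_onel hst).
Qed.

Lemma ideal_leib_zero a : leib_zero a -> valid_sum a -> leib_ideal a.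
Proof.
case=> g hg eg ha; apply: ideal_ext (hg) _ => p.
case vp: (validp p); first by rewrite eg // unfold_in.
have nvp : ~~ validp p by rewrite vp.
by rewrite (coef_invalid ha nvp) (coef_ideal_invalid hg nvp).
Qed.

Lemma leib_eqv_refl a : leib_eqv a a.
Proof. by apply: leib_zero_coef0 => p _; rewrite coef_fsub subrr. Qed.

Lemma leib_eqv_sym a b : leib_eqv a b -> leib_eqv b a.
Proof.
move=> h; apply: leib_zero_ext (leib_zero_fscale (-1) h) _ => p _.
by rewrite coef_fscale !coef_fsub mulN1r opprB.
Qed.

Lemma leib_eqv_trans a b c : leib_eqv a b -> leib_eqv b c -> leib_eqv a c.
Proof.
move=> h1 h2; apply: leib_zero_ext (leib_zero_cat h1 h2) _ => p _.
by rewrite coef_cat !coef_fsub addrA subrK.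
Qed.

Lemma coef_leib_eqv a b : coef a =1 coef b -> leib_eqv a b.
Proof. by move=> e; apply: leib_zero_coef0 => p _; rewrite coef_fsub e subrr. Qed.

Lemma fadd_leib_eqv a a' b b' :
  leib_eqv a a' -> leib_eqv b b' -> leib_eqv (fadd a b) (fadd a' b').
Proof.
move=> h1 h2; apply: leib_zero_ext (leib_zero_cat h1 h2) _ => p _.
by rewrite coef_cat !coef_fsub !coef_fadd; ring.
Qed.

Lemma fmul_leib_eqv a a' b b' :
  leib_eqv a a' -> leib_eqv b b' -> leib_eqv (fmul a b) (fmul a' b').
Proof.
move=> h1 h2.
apply: leib_zero_ext (leib_zero_cat (leib_zero_fmulr b h1) (leib_zero_fmull a' h2)) _.
by move=> p _; rewrite coef_cat fmul_subl fmul_subr !coef_fsub; ring.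
Qed.

End Congruence.

Add Parametric Relation (k : fieldType) : (fsum k) (@leib_eqv k)
  reflexivity proved by (@leib_eqv_refl k)
  symmetry proved by (@leib_eqv_sym k)
  transitivity proved by (@leib_eqv_trans k) as leib_eqv_rel.

Add Parametric Morphism (k : fieldType) : (@fadd k)
  with signature (@leib_eqv k) ==> (@leib_eqv k) ==> (@leib_eqv k) as fadd_leib_mor.
Proof. by move=> *; apply: fadd_leib_eqv. Qed.

Add Parametric Morphism (k : fieldType) : (@fmul k)
  with signature (@leib_eqv k) ==> (@leib_eqv k) ==> (@leib_eqv k) as fmul_leib_mor.
Proof. by move=> *; apply: fmul_leib_eqv. Qed.

(* Locked copies of the generators and of [rho]: setoid rewriting with the
   ring laws below would otherwise unfold them into lists and match [fadd] and
   [fmul] against their contents. *)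
Definition leib_dd (k : fieldType) := locked (dd k).
Definition leib_chi (k : fieldType) := locked (chi k).
Definition leib_rho (k : fieldType) := locked (rho k).

Lemma leib_genE (k : fieldType) :
  (leib_dd k = dd k) * (leib_chi k = chi k) * (leib_rho k = rho k).
Proof. by rewrite /leib_dd /leib_chi /leib_rho -!lock. Qed.

Section Leib.
Variable k : fieldType.
Local Notation "a ≈ b" := (leib_eqv a b) (at level 70).
Local Notation "a ⊕ b" := (fadd a b) (at level 50, left associativity).
Local Notation "a ⊗ b" := (fmul a b) (at level 40, left associativity).
Local Notation d := (leib_dd k).
Local Notation x := (leib_chi k).
Local Notation r := (leib_rho k).

Ltac homog_tac := rewrite ?leib_genE; repeat match goal with
  | |- is_true (homog _ _ (fsub _ _)) => apply: homog_fsub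
  | |- is_true (homog _ _ (fmul _ _)) => eapply homog_fmul
  | |- is_true (homog _ _ (dd _ _ _)) => apply: homog_dd
  | |- is_true (homog _ _ (chi _ _ _)) => apply: homog_chi
  | |- is_true (homog _ _ (Defs.one _ _)) => apply: homog_one
  end; try lia.

Lemma faddC (a b : fsum k) : a ⊕ b ≈ b ⊕ a.
Proof. by apply: coef_leib_eqv => p; rewrite !coef_fadd addrC. Qed.

Lemma faddA (a b c : fsum k) : a ⊕ (b ⊕ c) ≈ a ⊕ b ⊕ c.
Proof. rewrite /fadd catA; exact: leib_eqv_refl. Qed.

Lemma fmulA (a b c : fsum k) : a ⊗ (b ⊗ c) ≈ a ⊗ b ⊗ c.
Proof. exact/coef_leib_eqv/coef_fmulA. Qed.

Lemma fmulDl (a b c : fsum k) : (a ⊕ b) ⊗ c ≈ a ⊗ c ⊕ b ⊗ c.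
Proof. rewrite /fadd fmul_catl; exact: leib_eqv_refl. Qed.

Lemma fmulDr (a b c : fsum k) : a ⊗ (b ⊕ c) ≈ a ⊗ b ⊕ a ⊗ c.
Proof. exact/coef_leib_eqv/fmul_catr. Qed.

Lemma leib_mag n i j : (i < j)%N -> (j <= n)%N ->
  d n.+1 i ⊗ d n j ≈ d n.+1 j.+1 ⊗ d n i.
Proof.
by move=> h1 h2; rewrite !leib_genE;
apply: (leib_zero_rel (rel_mag k h1 h2)); homog_tac.
Qed.

Lemma leib_sym_far m i j :
  (i < m)%N -> (j < m)%N -> (i + 2 <= j)%N || (j + 2 <= i)%N ->
  x m i ⊗ x m j ≈ x m j ⊗ x m i.
Proof.
by move=> h1 h2 h3; rewrite !leib_genE;
apply: (leib_zero_rel (rel_sym_far k h1 h2 h3)); homog_tac.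
Qed.

Lemma leib_sym_braid m i : (i.+1 < m)%N ->
  x m i ⊗ (x m i.+1 ⊗ x m i) ≈ x m i.+1 ⊗ (x m i ⊗ x m i.+1).
Proof.
by move=> h; rewrite !leib_genE;
apply: (leib_zero_rel (rel_sym_braid k h)); homog_tac.
Qed.

Lemma leib_sym_inv m i : (i < m)%N -> x m i ⊗ x m i ≈ Defs.one k m.
Proof.
by move=> h; rewrite !leib_genE;
apply: (leib_zero_rel (rel_sym_inv k h)); homog_tac.
Qed.

Lemma leib_zeta_lt n i j : (i <= n)%N -> (j < n)%N -> (i < j)%N ->
  d n i ⊗ x n j ≈ x n.+1 j.+1 ⊗ d n i.
Proof.
by move=> h1 h2 h3; rewrite !leib_genE;
apply: (leib_zero_rel (rel_zeta_lt k h1 h2 h3)); homog_tac.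
Qed.

Lemma leib_zeta_eq n i : (i < n)%N ->
  d n i ⊗ x n i ≈ x n.+1 i.+1 ⊗ (x n.+1 i ⊗ d n i.+1).
Proof.
by move=> h; rewrite !leib_genE;
apply: (leib_zero_rel (rel_zeta_eq k h)); homog_tac.
Qed.

Lemma leib_zeta_succ n j : (j < n)%N ->
  d n j.+1 ⊗ x n j ≈ x n.+1 j ⊗ (x n.+1 j.+1 ⊗ d n j).
Proof.
by move=> h; rewrite !leib_genE;
apply: (leib_zero_rel (rel_zeta_succ k h h)); homog_tac.
Qed.

Lemma leib_zeta_gt n i j : (i <= n)%N -> (j < n)%N -> (j.+1 < i)%N ->
  d n i ⊗ x n j ≈ x n.+1 j ⊗ d n i.
Proof.
by move=> h1 h2 h3; rewrite !leib_genE;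
apply: (leib_zero_rel (rel_zeta_gt k h1 h2 h3)); homog_tac.
Qed.

Lemma leib_leibniz n j : (j <= n)%N ->
  d n.+1 j ⊗ d n j ≈ d n.+1 j.+1 ⊗ d n j ⊕ x n.+2 j.+1 ⊗ (d n.+1 j ⊗ d n j).
Proof.
move=> hj; rewrite !leib_genE.
have h : homog n n.+2 (dd k n.+1 j ⊗ dd k n j) by homog_tac.
have [g hg eg] : leib_zero (fsub (dd k n.+1 j.+1 ⊗ dd k n j)
    (fsub (Defs.one k n.+2) (chi k n.+2 j.+1) ⊗ (dd k n.+1 j ⊗ dd k n j))).
  by apply: (leib_zero_rel (rel_leib k hj)); homog_tac.
exists (fscale (-1) g); first exact: ideal_fscale.
move=> p vp; rewrite coef_fscale -eg // !coef_fsub fmul_subl coef_fsub coef_fadd.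
by rewrite (fmul_onel h); ring.
Qed.

Lemma inv_chi_chi m i s (a : fsum k) :
  (i < m)%N -> homog s m a -> x m i ⊗ (x m i ⊗ a) ≈ a.
Proof.
move=> hi ha; rewrite fmulA leib_sym_inv //.
exact/coef_leib_eqv/(fmul_onel ha).
Qed.

Lemma braid_chi m i (a : fsum k) : (i.+1 < m)%N ->
  x m i.+1 ⊗ (x m i ⊗ (x m i.+1 ⊗ a)) ≈ x m i ⊗ (x m i.+1 ⊗ (x m i ⊗ a)).
Proof.
move=> h; transitivity (x m i.+1 ⊗ (x m i ⊗ x m i.+1) ⊗ a).
  by rewrite !fmulA; reflexivity.
by rewrite -leib_sym_braid // !fmulA; reflexivity.
Qed.

Lemma chi_chainS m j a : (1 <= a <= j)%N ->
  chi_chain k m j.+1 a = chi k m.+1 j.+1 ⊗ chi_chain k m j a.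
Proof.
case/andP=> h1 h2; rewrite /chi_chain.
have -> : (j.+1 - a).+1 = (j - a).+1 + 1 by lia.
rewrite iotaD rev_cat /=.
by have -> : (a + (j - a).+1)%N = j.+1 by lia.
Qed.

Lemma rho0 m : r m 0 ≈ d m 0.
Proof. rewrite !leib_genE /rho /fadd cats0; exact: leib_eqv_refl. Qed.

Lemma rhoS m j : r m j.+1 ≈ d m j.+1 ⊕ x m.+1 j.+1 ⊗ r m j.
Proof.
rewrite !leib_genE; apply: coef_leib_eqv => p.
have iotaS : iota 1 j.+1 = iota 1 j ++ [:: j.+1].
  by rewrite -(addn1 j) iotaD add1n addn1.
rewrite /rho /fadd iotaS map_cat flatten_cat [LHS]coef_cat [RHS]coef_cat; congr (_ + _).
rewrite [LHS]coef_cat fmul_catr [RHS]coef_cat addrC; congr (_ + _).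
  by rewrite /= cats0 /chi_chain subnn.
rewrite fmul_flatten !coef_flatten !big_map big_seq [RHS]big_seq.
by apply: eq_bigr => a ha; rewrite chi_chainS // -mem_iota.
Qed.

Lemma rho_chi_lt m j e : (j < e)%N -> (e < m)%N ->
  r m j ⊗ x m e ≈ x m.+1 e.+1 ⊗ r m j.
Proof.
elim: j => [|j IH] h1 h2; first by rewrite rho0; apply: leib_zeta_lt; lia.
rewrite rhoS fmulDl fmulDr leib_zeta_lt; try lia.
rewrite -fmulA IH; try lia.
rewrite fmulA (leib_sym_far (i := j.+1) (j := e.+1)); try lia.
by rewrite fmulA; reflexivity.
Qed.

Lemma rho_chi_diag m j : (j.+1 < m)%N ->
  r m j.+1 ⊗ x m j.+1 ≈
  x m.+1 j.+2 ⊗ (x m.+1 j.+1 ⊗ d m j.+2) ⊕ x m.+1 j.+1 ⊗ (x m.+1 j.+2 ⊗ r m j).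
Proof.
move=> h; rewrite rhoS fmulDl leib_zeta_eq // -fmulA rho_chi_lt //.
reflexivity.
Qed.

Lemma rho_chi_succ m j : (j < m)%N -> r m j.+1 ⊗ x m j ≈ x m.+1 j ⊗ r m j.+1.
Proof.
case: j => [|j] h.
  rewrite rhoS rho0 fmulDl fmulDr (leib_zeta_succ (j := 0)) // -fmulA.
  rewrite leib_zeta_eq // (inv_chi_chi (i := 1) (s := m)); [|lia|homog_tac].
  rewrite faddC; reflexivity.
rewrite rhoS fmulDl fmulDr (leib_zeta_succ (j := j.+1)) // -fmulA rho_chi_diag //.
rewrite fmulDr (inv_chi_chi (i := j.+2) (s := m)); [|lia|homog_tac].
rewrite braid_chi; last lia.
rewrite rhoS !fmulDr !faddA (faddC (x m.+1 j.+1 ⊗ (x m.+1 j.+2 ⊗ d m j.+1))).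
reflexivity.
Qed.

Lemma rho_chi_gt m j e : (e < j)%N -> (j <= m)%N ->
  r m j ⊗ x m e ≈ x m.+1 e ⊗ r m j.
Proof.
elim: j e => [|j IH] e // h1 h2.
have [lt_ej | ge_ej] := ltnP e j; last first.
  have -> : e = j by lia.
  exact: rho_chi_succ.
rewrite rhoS fmulDl fmulDr (leib_zeta_gt (i := j.+1) (j := e)); try lia.
rewrite -fmulA IH; try lia.
rewrite fmulA (leib_sym_far (i := j.+1) (j := e)); try lia.
rewrite -fmulA; reflexivity.
Qed.

Lemma dd_rho_gt n j c : (j < c)%N -> (c <= n)%N ->
  d n.+1 c.+1 ⊗ r n j ≈ r n.+1 j ⊗ d n c.
Proof.
elim: j => [|j IH] h1 h2.
  rewrite !rho0; symmetry; apply: leib_mag; lia.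
rewrite !rhoS fmulDr fmulDl -(leib_mag (n := n) (i := j.+1) (j := c)); try lia.
rewrite fmulA (leib_zeta_gt (n := n.+1) (i := c.+1) (j := j.+1)); try lia.
rewrite -fmulA IH; try lia.
rewrite fmulA; reflexivity.
Qed.

Lemma dd_rho_diag n j : (j <= n)%N -> d n.+1 j ⊗ r n j ≈ r n.+1 j.+1 ⊗ d n j.
Proof.
case: j => [|j] hj.
  rewrite !rho0 rhoS rho0 fmulDl -fmulA; exact: leib_leibniz.
rewrite !rhoS fmulDr fmulA leib_zeta_eq; try lia.
rewrite -!fmulA dd_rho_gt; try lia.
rewrite ?fmulDr ?fmulDl -?fmulA faddA.
by apply: fadd_leib_eqv; [apply: leib_leibniz; lia | reflexivity].
Qed.

Lemma dd_rho_le n i j : (i <= j)%N -> (j <= n)%N ->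
  d n.+1 i ⊗ r n j ≈ r n.+1 j.+1 ⊗ d n i.
Proof.
elim: j i => [|j IH] i h1 h2.
  have -> : i = 0%N by lia.
  exact: dd_rho_diag.
move: h1; rewrite leq_eqVlt => /predU1P [-> | lt_ij]; first exact: dd_rho_diag.
rewrite (rhoS n j) (rhoS n.+1 j.+1) fmulDr fmulDl (leib_mag (n := n) (i := i) (j := j.+1));
  try lia.
rewrite fmulA (leib_zeta_lt (n := n.+1) (i := i) (j := j.+1)); try lia.
rewrite -fmulA IH; try lia.
rewrite fmulA; reflexivity.
Qed.

Lemma rho_rho_le n i j : (i <= j)%N -> (j <= n)%N ->
  r n.+1 i ⊗ r n j ≈ r n.+1 j.+1 ⊗ r n i.
Proof.
elim: i j => [|i IH] j h1 h2; first by rewrite !rho0; apply: dd_rho_le.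
rewrite (rhoS n.+1 i) (rhoS n i) fmulDl fmulDr dd_rho_le; try lia.
rewrite -fmulA IH; try lia.
rewrite (fmulA (r n.+1 j.+1)) (rho_chi_gt (m := n.+1) (j := j.+1) (e := i.+1)); try lia.
rewrite -fmulA; reflexivity.
Qed.

End Leib.

Theorem proposition3p9 (k : fieldType) (n i j : nat) :
  (i <= j)%N -> (j <= n)%N ->
  leib_eq (fmul (rho k n.+1 i) (rho k n j)) (fmul (rho k n.+1 j.+1) (rho k n i)).
Proof.
move=> hij hjn; apply: ideal_leib_zero.
  by have := rho_rho_le k hij hjn; rewrite !leib_genE.
apply: homog_valid (homog_fsub (homog_fmul _ _) (homog_fmul _ _));
  apply: homog_rho; lia.
Qed.
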